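(* Let $\epsilon>0$ and $\delta>0$ be arbitrary, and consider the open subset $B(\epsilon)\times\mathbb D_{<\delta}(T^*S^1)$ of $(\mathbb R^3\times T^*S^1,\ker(\alpha_{\mathrm{OT}}+\lambda_{\mathrm{can}}))$, a neighborhood of $\mathbb D_{\mathrm{OT}}\times S^1$. Then for every $C>0$ there is an embedding of the hypersurface $S_C=\mathbb D^2_{\le\pi}\times(-C,C)\times(-\tfrac{\delta}{2},\tfrac{\delta}{2})$ into $B(\epsilon)\times\mathbb D_{<\delta}(T^*S^1)$ such that the contact structure induces on $S_C$ the singular distribution $\ker(r\sin r\,d\vartheta-t\,ds)$, where $(r,\vartheta)$ are polar coordinates on the disk and $(s,t)$ are the coordinates on $(-C,C)\times(-\tfrac\delta2,\tfrac\delta2)$.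
   Context: $\alpha_{\mathrm{OT}}=\cos r\,dz+r\sin r\,d\vartheta$ on $\mathbb R^3$ in cylindrical coordinates $(r,\vartheta,z)$; $\mathbb D_{\mathrm{OT}}=\{r\le\pi,z=0\}$. Fix a small $\delta_0>0$ and set $B(h)=\mathbb D^2_{<\pi+\delta_0}\times(-h,h)\subset\mathbb R^3$ for $h>0$ (a cylindrical box around $\mathbb D_{\mathrm{OT}}$). On $T^*S^1$ use coordinates $(q,p)$, $q\in\mathbb R/2\pi\mathbb Z$, with $\lambda_{\mathrm{can}}=-p\,dq$, and $\mathbb D_{<\delta}(T^*S^1)=\{|p|<\delta\}$. The induced singular distribution of an embedding $\iota$ is $(D\iota)^{-1}(\xi)$ (the kernel of a vanishing form is the whole tangent space). *)

From HB Require Import structures.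
From mathcomp Require Import all_boot all_order all_algebra.
From mathcomp Require Import all_classical all_reals all_analysis.
Set Implicit Arguments. Unset Strict Implicit. Unset Printing Implicit Defensive.
Import Order.TTheory GRing.Theory Num.Theory.
Import numFieldNormedType.Exports.
Local Open Scope classical_set_scope.
Local Open Scope ring_scope.

Fixpoint smooth_k (R : realType) (V W : normedModType R) (k : nat)
    (U : set V) (f : V -> W) : Prop :=
  match k with
  | 0 => forall x, U x -> {for x, continuous f}
  | k'.+1 => (forall x, U x -> differentiable f x) /\
             (forall v : V, smooth_k k' U (fun x => 'd f x v))
  end.

Definition smooth_on (R : realType) (V W : normedModType R)
    (U : set V) (f : V -> W) : Prop := forall k, smooth_k k U f.

Definition c4 (R : realType) (u : 'rV[R]_4) (i : nat) : R := u ord0 (@inord 3 i).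
Definition c5 (R : realType) (w : 'rV[R]_5) (i : nat) : R := w ord0 (@inord 4 i).

(* sin r / r, extended smoothly by 1 at r = 0 *)
Definition sinc (R : realType) (r : R) : R := if r == 0 then 1 else sin r / r.

Definition rad (R : realType) (x y : R) : R := Num.sqrt (x ^+ 2 + y ^+ 2).

(* Source S_C = D^2_{<=pi} x (-C,C) x (-delta/2, delta/2) in R^4,
   with coordinates (x, y, s, t), (x,y) = (r cos th, r sin th). *)
Definition S_C (R : realType) (C delta : R) : set 'rV[R]_4 :=
  [set u | c4 u 0 ^+ 2 + c4 u 1 ^+ 2 <= pi ^+ 2 /\
           - C < c4 u 2 < C /\ - (delta / 2) < c4 u 3 < delta / 2].

(* The 1-form  r sin r d(theta) - t ds  on S_C, in Cartesian coordinates: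
   r sin r d(theta) = (sin r / r) (x dy - y dx). *)
Definition beta_S (R : realType) (u v : 'rV[R]_4) : R :=
  let x := c4 u 0 in let y := c4 u 1 in let t := c4 u 3 in
  sinc (rad x y) * (x * c4 v 1 - y * c4 v 0) - t * c4 v 2.

(* R^3 x T^*S^1 is represented through coordinates (X, Y, Z, Q, P) in R^5,
   where Q is a real lift of q in R / 2 pi Z.  The contact form
   alpha_OT + lambda_can = cos r dz + r sin r d(theta) - p dq. *)
Definition alpha (R : realType) (w v : 'rV[R]_5) : R :=
  let X := c5 w 0 in let Y := c5 w 1 in let P := c5 w 4 in
  cos (rad X Y) * c5 v 2 + sinc (rad X Y) * (X * c5 v 1 - Y * c5 v 0)
  - P * c5 v 3.

(* B(eps) x D_{<delta}(T^*S^1), B(h) = D^2_{<pi+delta0} x (-h,h) *)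
Definition target_box (R : realType) (delta0 eps delta : R) : set 'rV[R]_5 :=
  [set w | c5 w 0 ^+ 2 + c5 w 1 ^+ 2 < (pi + delta0) ^+ 2 /\
           - eps < c5 w 2 < eps /\ `|c5 w 4| < delta].

(* distance-smallness in R^3 x S^1 x R : coordinates X,Y,Z,P within d,
   and Q within d modulo 2 pi *)
Definition close5 (R : realType) (d : R) (w w' : 'rV[R]_5) : Prop :=
  `|c5 w' 0 - c5 w 0| < d /\ `|c5 w' 1 - c5 w 1| < d /\
  `|c5 w' 2 - c5 w 2| < d /\ `|c5 w' 4 - c5 w 4| < d /\
  exists k : int, `|c5 w' 3 - c5 w 3 - k%:~R * (2 * pi)| < d.

(* equality of the points of R^3 x T^*S^1 represented by w, w' *)
Definition same_pt (R : realType) (w w' : 'rV[R]_5) : Prop :=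
  c5 w' 0 = c5 w 0 /\ c5 w' 1 = c5 w 1 /\ c5 w' 2 = c5 w 2 /\
  c5 w' 4 = c5 w 4 /\ exists k : int, c5 w' 3 - c5 w 3 = k%:~R * (2 * pi).

(* F (composed with R -> R/2piZ in the Q-coordinate) is a smooth embedding
   of S into the subset T of R^3 x T^*S^1. *)
Definition smooth_embedding_into (R : realType) (S : set 'rV[R]_4)
    (T : set 'rV[R]_5) (F : 'rV[R]_4 -> 'rV[R]_5) : Prop :=
  (* smooth (in the manifold-with-boundary sense: smooth on an open nbhd) *)
  (exists U : set 'rV[R]_4, open U /\ S `<=` U /\ smooth_on U F) /\
  (forall u, S u -> T (F u)) /\
  (forall u, S u -> forall v : 'rV[R]_4, 'd F u v = 0 -> v = 0) /\
  (forall u u', S u -> S u' -> same_pt (F u) (F u') -> u = u') /\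
  (* homeomorphism onto its image (continuity of the inverse) *)
  (forall u, S u -> forall e : R, 0 < e -> exists2 d : R, 0 < d &
     forall u', S u' -> close5 d (F u) (F u') -> `|u' - u| < e).

(* the singular distribution induced by F, (DF)^{-1}(ker alpha), equals
   ker beta_S at every point of S *)
Definition induces_kernel (R : realType) (S : set 'rV[R]_4)
    (F : 'rV[R]_4 -> 'rV[R]_5) : Prop :=
  forall u, S u -> forall v : 'rV[R]_4,
    alpha (F u) ('d F u v) = 0 <-> beta_S u v = 0.

From Pilot Require Import Defs.
From mathcomp Require Import all_boot all_order all_algebra.
From mathcomp Require Import all_classical all_reals all_analysis.
From mathcomp Require Import ring lra.
Set Implicit Arguments. Unset Strict Implicit. Unset Printing Implicit Defensive.
Import Order.TTheory GRing.Theory Num.Theory.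
Import numFieldNormedType.Exports.
Local Open Scope classical_set_scope.
Local Open Scope ring_scope.

(* In coordinates (x, y, s, t) on S_C, with (x, y) = (r cos th,
   r sin th), consider the "shear" embedding, for a small constant a > 0,
       F_a(x, y, s, t) = (X, Y, Z, Q, P) = (x, y, a s, s, t + a cos r).
   Pulling back alpha = cos r dZ + r sin r d(theta) - P dQ gives
       a cos r ds + r sin r d(theta) - (t + a cos r) ds = r sin r d(theta) - t ds,
   i.e. exactly the form beta_S, so the induced distribution is ker beta_S.
   Choosing a C < eps and a <= delta / 2 puts F_a(S_C) inside the box; F_a is
   an injective immersion whose inverse (x, y, Z / a, P - a cos r) is
   continuous.  The only analytic subtlety is smoothness of cos r =
   cos (sqrt (x^2 + y^2)) at r = 0: we write it as the entire power series
   sum_n (-1)^n rho^n / (2n)! in rho = x^2 + y^2. *)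

Section EntireSeries.
Variable R : realType.

Definition series_fun (c : R^nat) (x : R) : R := limn (pseries c x).

Definition entire (c : R^nat) : Prop :=
  forall m K, cvgn (pseries (iter m (@pseries_diffs R) c) K).

Lemma entire_diffs c : entire c -> entire (pseries_diffs c).
Proof. by move=> ec m K; rewrite -iterSr; exact: ec. Qed.

Lemma is_derive_series_fun c x : entire c ->
  is_derive x (1 : R) (series_fun c) (series_fun (pseries_diffs c) x).
Proof.
move=> ec; apply: (@pseries_snd_diffs _ _ (`|x| + 1)).
- exact: (ec 0%N).
- exact: (ec 1%N).
- exact: (ec 2%N).
- by rewrite [ltRHS]ger0_norm ?addr_ge0// ltrDl.
Qed.

Lemma differentiable_series_fun c x : entire c ->
  differentiable (series_fun c) x.
Proof. by move=> ec; apply/derivable1_diffP; case: (is_derive_series_fun x ec). Qed.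

Lemma diff_series_fun c x : entire c ->
  'd (series_fun c) x = (fun h => h * series_fun (pseries_diffs c) x) :> (R -> R).
Proof.
move=> ec; have dc := is_derive_series_fun x ec.
rewrite deriv1E; last by case: dc.
by rewrite derive1E derive_val; apply/funext.
Qed.

(* Coefficients of cos (sqrt rho) = sum_n (-1)^n rho^n / (2n)!. *)
Definition cos_sqrt_coeff (n : nat) : R := (-1) ^+ n / (n.*2)`!%:R.

Lemma cos_sqrt_coeff_diffs_bound m n :
  `|iter m (@pseries_diffs R) cos_sqrt_coeff n| <= (n`!%:R)^-1.
Proof.
elim: m n => [|m IH] n /=.
  rewrite /cos_sqrt_coeff normrM normrX normrN normr1 expr1n mul1r normfV.
  rewrite ger0_norm// lef_pV2 ?posrE ?ltr0n ?fact_gt0// ler_nat.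
  by apply: leq_fact; rewrite -addnn leq_addr.
rewrite /pseries_diffs normrM ger0_norm//.
rewrite (le_trans (ler_wpM2l _ (IH n.+1)))//.
by rewrite factS natrM invfM mulrA mulfV ?mul1r// pnatr_eq0.
Qed.

Lemma entire_cos_sqrt : entire cos_sqrt_coeff.
Proof.
move=> m K; apply: normed_cvg.
apply: (@series_le_cvg _ _ (exp_coeff `|K|)).
- by move=> n /=.
- by move=> n; exact: exp_coeff_ge0.
- move=> n /=; rewrite normrM normrX mulrC ler_wpM2l ?exprn_ge0//.
  exact: cos_sqrt_coeff_diffs_bound.
- exact: is_cvg_series_exp_coeff.
Qed.

Lemma series_fun_cos_sqrt rho : 0 <= rho ->
  series_fun cos_sqrt_coeff rho = cos (Num.sqrt rho).
Proof.
move=> rho0; apply: cvg_lim => //.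
have -> : pseries cos_sqrt_coeff rho = series (cos_coeff' (Num.sqrt rho)).
  apply/funext => n; rewrite /pseries /series /=; apply: eq_bigr => i _.
  rewrite /cos_coeff' /cos_sqrt_coeff -mulrA mulrAC mulrA; congr (_ * _ * _).
  by rewrite -muln2 mulnC exprM sqr_sqrtr.
exact: cvg_cos_coeff'.
Qed.

End EntireSeries.

Arguments cos_sqrt_coeff {R} n.

Section GeneratedFunctions.
Variables (R : realType) (n : nat).
Notation Vn := 'rV[R]_n.

Inductive generated : (Vn -> R) -> Prop :=
  | gen_cst c : generated (fun _ => c)
  | gen_coord i : generated (fun u => u ord0 i)
  | gen_add f g : generated f -> generated g -> generated (fun u => f u + g u)
  | gen_mul f g : generated f -> generated g -> generated (fun u => f u * g u)
  | gen_series c h : entire c -> generated h ->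
      generated (fun u => series_fun c (h u)).

Lemma diff_cst_fun (c : R) (x v : Vn) : 'd (fun _ : Vn => c) x v = 0.
Proof. by rewrite -[fun _ => c]/(cst c) diff_cst. Qed.

Lemma diff_coord (i : 'I_n) (x v : Vn) : 'd (fun u : Vn => u ord0 i) x v = v ord0 i.
Proof.
rewrite -deriveE; last exact: differentiable_coord.
have := @derive_mx R Vn 1 n id x v (@derivable_id _ _ x v).
by rewrite derive_id => /(congr1 (fun M : Vn => M ord0 i)); rewrite mxE.
Qed.

Lemma diff_add_fun (f g : Vn -> R) x v :
  differentiable f x -> differentiable g x ->
  'd (fun u => f u + g u) x v = 'd f x v + 'd g x v.
Proof. by move=> df dg; rewrite -[fun u => _]/(f + g) diffD. Qed.

Lemma diff_mul_fun (f g : Vn -> R) x v :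
  differentiable f x -> differentiable g x ->
  'd (fun u => f u * g u) x v = f x * 'd g x v + g x * 'd f x v.
Proof. by move=> df dg; rewrite -[fun u => _]/(f * g) diffM. Qed.

Lemma diff_series_comp c (h : Vn -> R) x v : entire c -> differentiable h x ->
  'd (fun u => series_fun c (h u)) x v =
  'd h x v * series_fun (pseries_diffs c) (h x).
Proof.
move=> ec dh; rewrite -[fun u => _]/(series_fun c \o h) diff_comp //.
  by rewrite /= diff_series_fun.
exact: differentiable_series_fun.
Qed.

Lemma diff_coord_sqr (i : 'I_n) (x v : Vn) :
  'd (fun u : Vn => u ord0 i * u ord0 i) x v = (x ord0 i * v ord0 i) *+ 2.
Proof.
have di := differentiable_coord x ord0 i.
by rewrite diff_mul_fun // diff_coord mulr2n.
Qed.

Lemma generated_diff f : generated f ->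
  (forall x, differentiable f x) /\ (forall v, generated (fun x => 'd f x v)).
Proof.
elim=> {f} [c|i|f g _ [df Gdf] _ [dg Gdg]|f g Gf [df Gdf] Gg [dg Gdg]
           |c h ec Gh [dh Gdh]]; split=> [x|v].
- exact: differentiable_cst.
- by under eq_fun do rewrite diff_cst_fun; exact: gen_cst.
- exact: differentiable_coord.
- by under eq_fun do rewrite diff_coord; exact: gen_cst.
- exact: differentiableD.
- by under eq_fun do rewrite diff_add_fun //; exact: gen_add.
- exact: differentiableM.
- by under eq_fun do rewrite diff_mul_fun //; apply: gen_add; apply: gen_mul.
- by apply: differentiable_comp => //; exact: differentiable_series_fun.
- under eq_fun do rewrite diff_series_comp //.
  by apply: gen_mul => //; apply: gen_series => //; exact: entire_diffs.
Qed.

Lemma generated_differentiable f : generated f -> forall x, differentiable f x.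
Proof. by case/generated_diff. Qed.

Lemma differentiable_row m (F : Vn -> 'rV[R]_m) x :
  (forall j, differentiable (fun u => F u ord0 j) x) -> differentiable F x.
Proof.
move=> dF; have -> : F = \sum_(j < m) (fun u => F u ord0 j *: delta_mx ord0 j).
  by apply/funext => u; rewrite fct_sumE; exact: row_sum_delta.
by apply: differentiable_sum => j; exact: differentiableZl.
Qed.

Lemma diff_row m (F : Vn -> 'rV[R]_m) x v :
  (forall j, differentiable (fun u => F u ord0 j) x) ->
  'd F x v = \row_j 'd (fun u => F u ord0 j) x v.
Proof.
move=> dF; rewrite -deriveE; last exact: differentiable_row.
rewrite derive_mx; last exact/diff_derivable/differentiable_row.
by apply/matrixP => i j; rewrite !mxE (ord1 i) deriveE.
Qed.

Lemma generated_smooth m (F : Vn -> 'rV[R]_m) :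
  (forall j, generated (fun u => F u ord0 j)) -> smooth_on setT F.
Proof.
move=> GF k; elim: k F GF => [|k IH] F GF /=.
  move=> x _; apply/differentiable_continuous/differentiable_row => j.
  exact: generated_differentiable.
have dF x j : differentiable (fun u => F u ord0 j) x.
  exact: generated_differentiable.
split=> [x _|v]; first exact: differentiable_row.
apply: IH => j; under eq_fun do rewrite diff_row // mxE.
by have [_] := generated_diff (GF j).
Qed.

End GeneratedFunctions.

Section ShearEmbedding.
Variable R : realType.
Notation V4 := 'rV[R]_4.

Lemma generated_c4 k : generated (fun u : V4 => c4 u k).
Proof. exact: gen_coord. Qed.

Lemma diff_c4 k (x v : V4) : 'd (fun u : V4 => c4 u k) x v = c4 v k.
Proof. exact: diff_coord. Qed.

Lemma c4B (u u' : V4) k : c4 (u' - u) k = c4 u' k - c4 u k.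
Proof. by rewrite /c4 !mxE. Qed.

Lemma c4_inj (u u' : V4) : (forall k, (k < 4)%N -> c4 u k = c4 u' k) -> u = u'.
Proof.
by move=> H; apply/rowP => j; have := H j (ltn_ord j); rewrite /c4 inord_val.
Qed.

Lemma c4_norm_lt (u : V4) e :
  0 < e -> (forall k, (k < 4)%N -> `|c4 u k| < e) -> `|u| < e.
Proof.
move=> e0 H; rewrite [ltLHS]/Num.Def.normr /= mx_normrE.
apply: bigmax_lt => // -[i j] _ /=; rewrite (ord1 i).
by have := H j (ltn_ord j); rewrite /c4 inord_val.
Qed.

(* x^2 + y^2 and cos r = cos (sqrt (x^2 + y^2)), the latter as an entire
   series in x^2 + y^2 so that it is visibly smooth at r = 0. *)
Definition rho2 (u : V4) : R := c4 u 0 * c4 u 0 + c4 u 1 * c4 u 1.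

Definition cos_rad (u : V4) : R := series_fun cos_sqrt_coeff (rho2 u).

Lemma generated_rho2 : generated rho2.
Proof. by apply: gen_add; apply: gen_mul; apply: generated_c4. Qed.

Lemma generated_cos_rad : generated cos_rad.
Proof. by apply: gen_series; [exact: entire_cos_sqrt|exact: generated_rho2]. Qed.

Lemma cos_radE u : cos_rad u = cos (Defs.rad (c4 u 0) (c4 u 1)).
Proof. by rewrite /cos_rad /rho2 -!expr2 series_fun_cos_sqrt ?addr_ge0 ?sqr_ge0. Qed.

Lemma cos_rad_planar_continuous (u : V4) e : 0 < e -> exists2 eta, 0 < eta &
  forall u', `|c4 u' 0 - c4 u 0| < eta -> `|c4 u' 1 - c4 u 1| < eta ->
    `|cos_rad u - cos_rad u'| < e.
Proof.
move=> e0; have := differentiable_continuous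
  (generated_differentiable generated_cos_rad u).
move=> /cvgrPdist_lt /(_ e e0) /nbhs_ballP [eta eta0 near_u].
exists eta => // u' d0 d1.
pose w : V4 := \row_(j < 4) (if (j < 2)%N then u' ord0 j else u ord0 j).
have cw k : (k < 4)%N -> c4 w k = if (k < 2)%N then c4 u' k else c4 u k.
  by move=> k4; rewrite {1}/c4 mxE inordK.
have -> : cos_rad u' = cos_rad w by rewrite /cos_rad /rho2 !cw.
apply: near_u; rewrite -ball_normE /ball_ /= distrC.
apply: c4_norm_lt => // k k4; rewrite c4B cw //.
by case: k k4 => [|[|[|[|k]]]] //= _; rewrite subrr normr0.
Qed.

Variable a : R.

Definition shear_coord (j : nat) (u : V4) : R :=
  match j with
  | 0 => c4 u 0 | 1 => c4 u 1 | 2 => a * c4 u 2 | 3 => c4 u 2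
  | _ => c4 u 3 + a * cos_rad u
  end.

Definition shear (u : V4) : 'rV[R]_5 := \row_(j < 5) shear_coord j u.

Lemma generated_shear_coord j : generated (shear_coord j).
Proof.
case: j => [|[|[|[|j]]]] /=; try exact: generated_c4.
  by apply: gen_mul; [exact: gen_cst|exact: generated_c4].
apply: gen_add; first exact: generated_c4.
by apply: gen_mul; [exact: gen_cst|exact: generated_cos_rad].
Qed.

Lemma c5_shear u i : (i < 5)%N -> c5 (shear u) i = shear_coord i u.
Proof. by move=> i5; rewrite /c5 mxE inordK. Qed.

Lemma c5_diff_shear u v i : (i < 5)%N ->
  c5 ('d shear u v) i = 'd (shear_coord i) u v.
Proof.
have shear_row j : (fun w => shear w ord0 j) = shear_coord j.
  by apply/funext => w; rewrite mxE.
move=> i5; rewrite diff_row => [|j]; last first.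
  by rewrite shear_row; exact: generated_differentiable (generated_shear_coord j) u.
by rewrite /c5 mxE shear_row inordK.
Qed.

Lemma smooth_shear : smooth_on setT shear.
Proof.
apply: generated_smooth => j; under eq_fun do rewrite mxE.
exact: generated_shear_coord.
Qed.

Lemma diff_shear_coord2 (u v : V4) : 'd (shear_coord 2) u v = a * c4 v 2.
Proof.
rewrite diff_mul_fun ?diff_c4 ?diff_cst_fun ?mulr0 ?addr0 //.
exact: generated_differentiable (generated_c4 _) u.
Qed.

Lemma diff_shear_coord0 (u v : V4) : 'd (shear_coord 0) u v = c4 v 0.
Proof. exact: diff_c4. Qed.

Lemma diff_shear_coord1 (u v : V4) : 'd (shear_coord 1) u v = c4 v 1.
Proof. exact: diff_c4. Qed.

Lemma diff_shear_coord3 (u v : V4) : 'd (shear_coord 3) u v = c4 v 2.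
Proof. exact: diff_c4. Qed.

Lemma diff_rho2 (u v : V4) :
  'd rho2 u v = (c4 u 0 * c4 v 0 + c4 u 1 * c4 v 1) *+ 2.
Proof.
have dc4 k := generated_differentiable (generated_c4 k) u.
rewrite diff_add_fun; try exact: differentiableM.
by rewrite !diff_coord_sqr mulrnDl.
Qed.

Lemma diff_shear_coord4 (u v : V4) : c4 v 0 = 0 -> c4 v 1 = 0 ->
  'd (shear_coord 4) u v = c4 v 3.
Proof.
move=> v0 v1; have dcos := generated_differentiable generated_cos_rad u.
rewrite diff_add_fun; first last.
- by apply: differentiableM.
- exact: generated_differentiable (generated_c4 _) u.
rewrite diff_c4 diff_mul_fun // diff_cst_fun.
rewrite diff_series_comp; last 2 first.
- exact: entire_cos_sqrt.
- exact: generated_differentiable generated_rho2 u.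
by rewrite diff_rho2 v0 v1; ring.
Qed.

Lemma alpha_shear u v : alpha (shear u) ('d shear u v) = beta_S u v.
Proof.
rewrite /alpha /beta_S !c5_shear //.
rewrite (c5_diff_shear _ _ (isT : 0 < 5)%N) diff_shear_coord0.
rewrite (c5_diff_shear _ _ (isT : 1 < 5)%N) diff_shear_coord1.
rewrite (c5_diff_shear _ _ (isT : 2 < 5)%N) diff_shear_coord2.
rewrite (c5_diff_shear _ _ (isT : 3 < 5)%N) diff_shear_coord3.
by rewrite /shear_coord -cos_radE; ring.
Qed.

(* The components X, Y, Q, P of dF_a v recover all four coordinates of v. *)
Lemma shear_immersion u v : 'd shear u v = 0 -> v = 0.
Proof.
move=> dv0; have dcoord i : (i < 5)%N -> 'd (shear_coord i) u v = 0.
  by move=> i5; rewrite -c5_diff_shear // dv0 /c5 mxE.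
have v0 : c4 v 0 = 0 by rewrite -(diff_shear_coord0 u) dcoord.
have v1 : c4 v 1 = 0 by rewrite -(diff_shear_coord1 u) dcoord.
have v2 : c4 v 2 = 0 by rewrite -(diff_shear_coord3 u) dcoord.
have v3 : c4 v 3 = 0 by rewrite -(diff_shear_coord4 u v0 v1) (dcoord 4%N).
apply: c4_inj => k k4; rewrite [c4 0 k]/c4 mxE.
by case: k k4 => [|[|[|[|k]]]].
Qed.

Hypothesis a_gt0 : 0 < a.

(* The point is recovered from (X, Y, Z, P): no information about Q is used. *)
Lemma shear_injective u u' : same_pt (shear u) (shear u') -> u = u'.
Proof.
move=> [eq0 [eq1 [eq2 [eq4 _]]]]; rewrite !c5_shear //= in eq0 eq1 eq2 eq4.
have eq3 : c4 u' 2 = c4 u 2 by apply: (mulfI (lt0r_neq0 a_gt0)).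
rewrite /cos_rad /rho2 eq0 eq1 in eq4; have eq5 := addIr _ eq4.
by apply: c4_inj => k k4; case: k k4 => [|[|[|[|k]]]].
Qed.

(* The inverse (X, Y, Z, P) |-> (X, Y, Z / a, P - a cos r) is continuous. *)
Lemma shear_inverse_continuous u e : 0 < e -> exists2 d : R, 0 < d &
  forall u', close5 d (shear u) (shear u') -> `|u' - u| < e.
Proof.
move=> e0; have e2a : 0 < e / (2 * a) by rewrite divr_gt0 ?mulr_gt0.
have [eta eta0 cos_near] := cos_rad_planar_continuous u e2a.
exists (Num.min (Num.min (e / 2) (a * e)) eta).
  by rewrite !lt_min eta0 divr_gt0 ?mulr_gt0.
move=> u' [d0 [d1 [d2 [d4 _]]]]; rewrite !c5_shear //= !lt_min in d0 d1 d2 d4.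
case/andP: d0 => /andP[d0 _] d0'; case/andP: d1 => /andP[d1 _] d1'.
case/andP: d2 => /andP[_ d2] _; case/andP: d4 => /andP[d4 _] _.
have hcos := cos_near u' d0' d1'.
apply: c4_norm_lt => // k k4; rewrite c4B.
case: k k4 => [|[|[|[|k]]]] // _; first (by move: d0; lra); first (by move: d1; lra).
  by move: d2; rewrite -mulrBr normrM gtr0_norm // ltr_pM2l.
have -> : c4 u' 3 - c4 u 3 = (c4 u' 3 + a * cos_rad u' - (c4 u 3 + a * cos_rad u))
    + a * (cos_rad u - cos_rad u') by ring.
rewrite (le_lt_trans (ler_normD _ _)) // normrM gtr0_norm //.
have : a * `|cos_rad u - cos_rad u'| < a * (e / (2 * a)) by rewrite ltr_pM2l.
have -> : a * (e / (2 * a)) = e / 2 by field; rewrite lt0r_neq0.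
by move: d4; lra.
Qed.

Lemma shear_in_box delta0 eps C delta : 0 < delta0 ->
  a * C < eps -> a <= delta / 2 ->
  forall u, S_C C delta u -> target_box delta0 eps delta (shear u).
Proof.
move=> d00 aC ad u [Hd [/andP[Hs1 Hs2] /andP[Ht1 Ht2]]].
rewrite /target_box /= !c5_shear //=; split; first by have := pi_gt0 R; nra.
have hs : `|a * c4 u 2| < eps.
  rewrite normrM gtr0_norm // (le_lt_trans _ aC) // ler_wpM2l ?(ltW a_gt0) //.
  by apply: ltW; rewrite ltr_norml Hs1.
have ht : `|c4 u 3| < delta / 2 by rewrite ltr_norml Ht1.
have hcos : `|a * cos_rad u| <= a.
  by rewrite normrM gtr0_norm // ler_piMr ?(ltW a_gt0) // cos_radE cos_max.
split; first by rewrite -ltr_norml.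
by rewrite (le_lt_trans (ler_normD _ _)) //; lra.
Qed.

End ShearEmbedding.

Theorem mainTheorem3 (R : realType) (delta0 eps delta : R) :
  0 < delta0 -> 0 < eps -> 0 < delta ->
  forall C : R, 0 < C ->
  exists F : 'rV[R]_4 -> 'rV[R]_5,
    smooth_embedding_into (S_C C delta) (target_box delta0 eps delta) F /\
    induces_kernel (S_C C delta) F.
Proof.
move=> d00 e0 d0 C C0.
pose a := Num.min (eps / (2 * C)) (delta / 2).
have a0 : 0 < a by rewrite lt_min !divr_gt0 ?mulr_gt0.
have aC : a * C < eps.
  have : a <= eps / (2 * C) by rewrite ge_min lexx.
  by rewrite ler_pdivlMr ?mulr_gt0 // => h; nra.
have ad : a <= delta / 2 by rewrite ge_min lexx orbT.
exists (shear a); split; [split|].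
- by exists setT; split; [exact: openT | split => //; exact: smooth_shear].
- split; first exact: shear_in_box.
  split; first by move=> u _; exact: shear_immersion.
  split; first by move=> u u' _ _; exact: shear_injective.
  move=> u _ e e0'; have [d d0' near] := shear_inverse_continuous a0 u e0'.
  by exists d => // u' _; exact: near.
- by move=> u _ v; rewrite alpha_shear.
Qed.
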